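(* Let $\mathcal{C}$ be a pre-Hilbert $*$-category and $A$ an object of $\mathcal{C}$. Then the ordered $*$-ring $\mathcal{C}(A,A)$ is inverse closed: for all Hermitian $a,b\in\mathcal{C}(A,A)$, if $a\geq b$ and $b\succ 0$, then $a\succ 0$.
   Context: A $*$-category is a category with a choice of $f^*\colon Y\to X$ for each $f\colon X\to Y$ such that $1^*=1$, $(gf)^*=f^*g^*$, $(f^* )^*=f$. A pre-Hilbert $*$-category is a $*$-category with (R1) a zero object, (R2) orthonormal biproducts of all pairs of objects (biproducts $(X,s_1,r_1,s_2,r_2)$ with $r_k=s_k^*$), (R3) an isometric kernel (kernel $m$ with $m^*m=1$) for every morphism, and (R4) every diagonal $\Delta\colon X\to X\oplus X$ a kernel of some morphism. Such a category is additive, so $\mathcal{C}(A,A)$ is a ring (addition from the additive structure, multiplication by composition) with involution $a\mapsto a^*$. An endomorphism $a$ is Hermitian if $a^*=a$. The canonical order on Hermitian elements of $\mathcal{C}(A,A)$: $a\leq b$ iff $b-a = y^*y$ for some object $Y$ and some $y\colon A\to Y$. Write $a\prec b$ (or $b\succ a$) if $a\leq b$ and $b-a$ is invertible. *)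

Set Implicit Arguments.
Unset Strict Implicit.

Record StarCat := {
  Ob : Type;
  Hom : Ob -> Ob -> Type;
  comp : forall X Y Z : Ob, Hom Y Z -> Hom X Y -> Hom X Z;
  idm : forall X : Ob, Hom X X;
  comp_assoc : forall (W X Y Z : Ob) (h : Hom Y Z) (g : Hom X Y) (f : Hom W X),
      comp h (comp g f) = comp (comp h g) f;
  comp_id_l : forall (X Y : Ob) (f : Hom X Y), comp (idm Y) f = f;
  comp_id_r : forall (X Y : Ob) (f : Hom X Y), comp f (idm X) = f;
  star : forall X Y : Ob, Hom X Y -> Hom Y X;
  star_idm : forall X : Ob, star (idm X) = idm X;
  star_comp : forall (X Y Z : Ob) (g : Hom Y Z) (f : Hom X Y),
      star (comp g f) = comp (star f) (star g);
  star_star : forall (X Y : Ob) (f : Hom X Y), star (star f) = f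
}.

Arguments comp {s X Y Z} _ _.
Arguments idm {s} X.
Arguments star {s X Y} _.
Arguments Hom s _ _ : clear implicits.
Arguments Ob s : clear implicits.

Section PreHilbert.
Variable C : StarCat.

Definition is_zero_object (Z : Ob C) : Prop :=
  forall X : Ob C,
    (inhabited (Hom C Z X) /\ forall f g : Hom C Z X, f = g) /\
    (inhabited (Hom C X Z) /\ forall f g : Hom C X Z, f = g).

Definition is_zero_mor (X Y : Ob C) (f : Hom C X Y) : Prop :=
  exists (Z : Ob C) (u : Hom C X Z) (v : Hom C Z Y),
    is_zero_object Z /\ f = comp v u.

Definition is_biproduct (A B W : Ob C)
    (s1 : Hom C A W) (r1 : Hom C W A) (s2 : Hom C B W) (r2 : Hom C W B) : Prop :=
  comp r1 s1 = idm A /\ comp r2 s2 = idm B /\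
  is_zero_mor (comp r1 s2) /\ is_zero_mor (comp r2 s1) /\
  (forall (V : Ob C) (f : Hom C V A) (g : Hom C V B),
      exists h : Hom C V W, (comp r1 h = f /\ comp r2 h = g) /\
        forall h' : Hom C V W, comp r1 h' = f -> comp r2 h' = g -> h' = h) /\
  (forall (V : Ob C) (f : Hom C A V) (g : Hom C B V),
      exists h : Hom C W V, (comp h s1 = f /\ comp h s2 = g) /\
        forall h' : Hom C W V, comp h' s1 = f -> comp h' s2 = g -> h' = h).

Definition is_orthonormal_biproduct (A B W : Ob C)
    (s1 : Hom C A W) (r1 : Hom C W A) (s2 : Hom C B W) (r2 : Hom C W B) : Prop :=
  is_biproduct s1 r1 s2 r2 /\ r1 = star s1 /\ r2 = star s2.

Definition is_kernel (K X Y : Ob C) (m : Hom C K X) (f : Hom C X Y) : Prop :=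
  is_zero_mor (comp f m) /\
  forall (V : Ob C) (g : Hom C V X), is_zero_mor (comp f g) ->
    exists h : Hom C V K, comp m h = g /\
      forall h' : Hom C V K, comp m h' = g -> h' = h.

Definition is_pre_hilbert : Prop :=
  (exists Z : Ob C, is_zero_object Z) /\
  (forall A B : Ob C, exists (W : Ob C) (s1 : Hom C A W) (r1 : Hom C W A)
       (s2 : Hom C B W) (r2 : Hom C W B), is_orthonormal_biproduct s1 r1 s2 r2) /\
  (forall (X Y : Ob C) (f : Hom C X Y), exists (K : Ob C) (m : Hom C K X),
       is_kernel m f /\ comp (star m) m = idm K) /\
  (forall (X W : Ob C) (s1 : Hom C X W) (r1 : Hom C W X) (s2 : Hom C X W)
       (r2 : Hom C W X) (d : Hom C X W),
     is_orthonormal_biproduct s1 r1 s2 r2 ->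
     comp r1 d = idm X -> comp r2 d = idm X ->
     exists (Y : Ob C) (g : Hom C W Y), is_kernel d g).

(** Addition of parallel morphisms induced by biproducts:
    h = f + g  iff  h = nabla o <f, g> for a biproduct Y (+) Y. *)
Definition is_sum (X Y : Ob C) (f g h : Hom C X Y) : Prop :=
  exists (W : Ob C) (s1 : Hom C Y W) (r1 : Hom C W Y) (s2 : Hom C Y W)
    (r2 : Hom C W Y) (u : Hom C X W) (n : Hom C W Y),
    is_biproduct s1 r1 s2 r2 /\
    comp r1 u = f /\ comp r2 u = g /\
    comp n s1 = idm Y /\ comp n s2 = idm Y /\
    h = comp n u.

Definition hermitian (A : Ob C) (a : Hom C A A) : Prop := star a = a.

Definition invertible (A : Ob C) (d : Hom C A A) : Prop :=
  exists c : Hom C A A, comp c d = idm A /\ comp d c = idm A.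

(** canonical order: a <= b iff b - a = y^* y, i.e. b = a + y^* y *)
Definition star_le (A : Ob C) (a b : Hom C A A) : Prop :=
  exists (Y : Ob C) (y : Hom C A Y), is_sum a (comp (star y) y) b.

Definition star_lt (A : Ob C) (a b : Hom C A A) : Prop :=
  star_le a b /\ exists d : Hom C A A, is_sum a d b /\ invertible d.

End PreHilbert.

(* The hypotheses give b = x^* x invertible and a = b + y^* y. With orthonormal
   biproducts, a = h^* h for h = <x, y> : A -> Y0 (+) Y1, and h is a split mono
   since b^-1 x^* p1 h = 1 for the first projection p1. Axiom (R4) makes every
   split mono a kernel, so h factors as j m with j an isometric kernel (R3) and
   m an isomorphism. Hence a = m^* j^* j m = m^* m is invertible. *)

Local Infix "∘" := comp (at level 40, left associativity).
Local Notation "f ^*" := (star f) (at level 2, left associativity, format "f ^*").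

Section PreHilbertFacts.
Context {C : StarCat}.

Lemma zero_mor_unique (X Y : Ob C) (f g : Hom C X Y) :
  is_zero_mor f -> is_zero_mor g -> f = g.
Proof.
  intros [Z [u [v [HZ ->]]]] [Z' [u' [v' [HZ' ->]]]].
  destruct (HZ Z') as [[[t] _] _].
  destruct (HZ' X) as [_ [_ Hu]].
  destruct (HZ Y) as [[_ Hv] _].
  rewrite (Hu u' (t ∘ u)), (Hv v (v' ∘ t)).
  now rewrite comp_assoc.
Qed.

Lemma zero_mor_compl (X Y W : Ob C) (f : Hom C X Y) (g : Hom C Y W) :
  is_zero_mor f -> is_zero_mor (g ∘ f).
Proof.
  intros [Z [u [v [HZ ->]]]]. exists Z, u, (g ∘ v).
  split; [exact HZ | apply comp_assoc].
Qed.

Lemma zero_mor_compr (X Y W : Ob C) (f : Hom C X Y) (g : Hom C W X) :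
  is_zero_mor f -> is_zero_mor (f ∘ g).
Proof.
  intros [Z [u [v [HZ ->]]]]. exists Z, (u ∘ g), v.
  split; [exact HZ | symmetry; apply comp_assoc].
Qed.

Section Biproduct.
Context {A B W : Ob C} {s1 : Hom C A W} {r1 : Hom C W A}
  {s2 : Hom C B W} {r2 : Hom C W B}.
Hypothesis Hbp : is_biproduct s1 r1 s2 r2.

Lemma biproduct_r1s1 : r1 ∘ s1 = idm A.
Proof. apply Hbp. Qed.

Lemma biproduct_r2s2 : r2 ∘ s2 = idm B.
Proof. apply Hbp. Qed.

Lemma biproduct_r1s2_zero : is_zero_mor (r1 ∘ s2).
Proof. apply Hbp. Qed.

Lemma biproduct_r2s1_zero : is_zero_mor (r2 ∘ s1).
Proof. apply Hbp. Qed.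

Lemma biproduct_pair {V : Ob C} (f : Hom C V A) (g : Hom C V B) :
  exists h : Hom C V W, r1 ∘ h = f /\ r2 ∘ h = g.
Proof.
  destruct Hbp as [_ [_ [_ [_ [Hprod _]]]]].
  destruct (Hprod V f g) as [h [Hh _]]. now exists h.
Qed.

Lemma biproduct_hom_ext {V : Ob C} (f g : Hom C V W) :
  r1 ∘ f = r1 ∘ g -> r2 ∘ f = r2 ∘ g -> f = g.
Proof.
  intros E1 E2. destruct Hbp as [_ [_ [_ [_ [Hprod _]]]]].
  destruct (Hprod V (r1 ∘ g) (r2 ∘ g)) as [h [_ Huniq]].
  now rewrite (Huniq f), (Huniq g).
Qed.

Lemma biproduct_copair {V : Ob C} (f : Hom C A V) (g : Hom C B V) :
  exists h : Hom C W V, h ∘ s1 = f /\ h ∘ s2 = g.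
Proof.
  destruct Hbp as [_ [_ [_ [_ [_ Hcoprod]]]]].
  destruct (Hcoprod V f g) as [h [Hh _]]. now exists h.
Qed.

Lemma biproduct_cohom_ext {V : Ob C} (f g : Hom C W V) :
  f ∘ s1 = g ∘ s1 -> f ∘ s2 = g ∘ s2 -> f = g.
Proof.
  intros E1 E2. destruct Hbp as [_ [_ [_ [_ [_ Hcoprod]]]]].
  destruct (Hcoprod V (g ∘ s1) (g ∘ s2)) as [h [_ Huniq]].
  now rewrite (Huniq f), (Huniq g).
Qed.

Lemma biproduct_inr_components {V : Ob C} (z : Hom C V A) (d : Hom C V B) :
  is_zero_mor z -> r1 ∘ (s2 ∘ d) = z /\ r2 ∘ (s2 ∘ d) = d.
Proof.
  intros Hz. rewrite !comp_assoc, biproduct_r2s2, comp_id_l. split; [|reflexivity].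
  apply zero_mor_unique; [apply zero_mor_compr, biproduct_r1s2_zero | exact Hz].
Qed.

End Biproduct.

Lemma sum_zero_l (X : Ob C) (z d e : Hom C X X) :
  is_zero_mor z -> is_sum z d e -> e = d.
Proof.
  intros Hz [W [s1 [r1 [s2 [r2 [u [n [Hbp [Hu1 [Hu2 [_ [Hn2 ->]]]]]]]]]]]].
  destruct (biproduct_inr_components Hbp z d Hz) as [E1 E2].
  assert (Hu : u = s2 ∘ d) by (apply (biproduct_hom_ext Hbp); congruence).
  now rewrite Hu, comp_assoc, Hn2, comp_id_l.
Qed.

Lemma sum_zero_l_intro (HC : is_pre_hilbert C) (X : Ob C) (z d : Hom C X X) :
  is_zero_mor z -> is_sum z d d.
Proof.
  intros Hz. destruct HC as [_ [R2 _]].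
  destruct (R2 X X) as [W [s1 [r1 [s2 [r2 [Hbp _]]]]]].
  destruct (biproduct_copair Hbp (idm X) (idm X)) as [n [Hn1 Hn2]].
  destruct (biproduct_inr_components Hbp z d Hz) as [E1 E2].
  exists W, s1, r1, s2, r2, (s2 ∘ d), n.
  refine (conj Hbp (conj E1 (conj E2 (conj Hn1 (conj Hn2 _))))).
  now rewrite comp_assoc, Hn2, comp_id_l.
Qed.

Lemma star_lt_zero_l (HC : is_pre_hilbert C) {A : Ob C} {z b : Hom C A A} :
  is_zero_mor z ->
  star_lt z b <-> (exists (Y : Ob C) (y : Hom C A Y), b = y^* ∘ y) /\ invertible b.
Proof.
  intros Hz. split.
  - intros [[Y [y Hy]] [d [Hd Hinv]]].
    apply sum_zero_l in Hy; [|exact Hz]. apply sum_zero_l in Hd; [|exact Hz].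
    split; [now exists Y, y | now rewrite Hd].
  - intros [[Y [y ->]] Hinv]. split.
    + exists Y, y. now apply sum_zero_l_intro.
    + exists (y^* ∘ y). split; [now apply sum_zero_l_intro | exact Hinv].
Qed.

Lemma sum_of_squares {A Y0 Y1 V : Ob C} {x : Hom C A Y0} {y : Hom C A Y1}
    {S1 : Hom C Y0 V} {S2 : Hom C Y1 V} {h : Hom C A V} {a : Hom C A A} :
  is_biproduct S1 S1^* S2 S2^* -> S1^* ∘ h = x -> S2^* ∘ h = y ->
  is_sum (x^* ∘ x) (y^* ∘ y) a -> a = h^* ∘ h.
Proof.
  intros HV Hh1 Hh2 [W [s1 [r1 [s2 [r2 [u [n [Hbp [Hu1 [Hu2 [Hn1 [Hn2 ->]]]]]]]]]]]].
  destruct (biproduct_copair HV (s1 ∘ x^*) (s2 ∘ y^*)) as [D [HD1 HD2]].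
  assert (Hstar1 : h^* ∘ S1 = x^*)
    by now rewrite <- (star_star S1), <- star_comp, Hh1.
  assert (Hstar2 : h^* ∘ S2 = y^*)
    by now rewrite <- (star_star S2), <- star_comp, Hh2.
  assert (HnD : n ∘ D = h^*).
  { apply (biproduct_cohom_ext HV).
    - now rewrite <- comp_assoc, HD1, comp_assoc, Hn1, comp_id_l.
    - now rewrite <- comp_assoc, HD2, comp_assoc, Hn2, comp_id_l. }
  assert (Hr1D : r1 ∘ D = x^* ∘ S1^*).
  { apply (biproduct_cohom_ext HV).
    - rewrite <- !comp_assoc, HD1, (biproduct_r1s1 HV), comp_id_r, comp_assoc.
      now rewrite (biproduct_r1s1 Hbp), comp_id_l.
    - rewrite <- !comp_assoc, HD2. apply zero_mor_unique.
      + rewrite comp_assoc. apply zero_mor_compr, (biproduct_r1s2_zero Hbp).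
      + apply zero_mor_compl, (biproduct_r1s2_zero HV). }
  assert (Hr2D : r2 ∘ D = y^* ∘ S2^*).
  { apply (biproduct_cohom_ext HV).
    - rewrite <- !comp_assoc, HD1. apply zero_mor_unique.
      + rewrite comp_assoc. apply zero_mor_compr, (biproduct_r2s1_zero Hbp).
      + apply zero_mor_compl, (biproduct_r2s1_zero HV).
    - rewrite <- !comp_assoc, HD2, (biproduct_r2s2 HV), comp_id_r, comp_assoc.
      now rewrite (biproduct_r2s2 Hbp), comp_id_l. }
  assert (HDh : D ∘ h = u).
  { apply (biproduct_hom_ext Hbp).
    - now rewrite comp_assoc, Hr1D, <- comp_assoc, Hh1.
    - now rewrite comp_assoc, Hr2D, <- comp_assoc, Hh2. }
  now rewrite <- HDh, comp_assoc, HnD.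
Qed.

Lemma star_le_square (HC : is_pre_hilbert C) {A Y0 : Ob C} {x : Hom C A Y0}
    {a : Hom C A A} :
  star_le (x^* ∘ x) a ->
  exists (V : Ob C) (h : Hom C A V) (p : Hom C V Y0), p ∘ h = x /\ a = h^* ∘ h.
Proof.
  intros [Y1 [y Hsum]]. destruct HC as [_ [R2 _]].
  destruct (R2 Y0 Y1) as [V [S1 [R1 [S2 [R2' [HV [-> ->]]]]]]].
  destruct (biproduct_pair HV x y) as [h [Hh1 Hh2]].
  exists V, h, S1^*. split; [exact Hh1|].
  exact (sum_of_squares HV Hh1 Hh2 Hsum).
Qed.

Section SplitMono.
Hypothesis HC : is_pre_hilbert C.
Context {A V : Ob C} {h : Hom C A V} {L : Hom C V A}.
Hypothesis HL : L ∘ h = idm A.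

(* h is the equalizer of 1 and h L, i.e. the kernel of k <1, h L> where the
   diagonal is the kernel of k by (R4). *)
Lemma split_mono_kernel :
  exists (Y : Ob C) (f : Hom C V Y), is_zero_mor (f ∘ h) /\
    forall (T : Ob C) (g : Hom C T V), is_zero_mor (f ∘ g) -> g = h ∘ (L ∘ g).
Proof.
  destruct HC as [_ [R2 [_ R4]]].
  destruct (R2 V V) as [W [t1 [q1 [t2 [q2 [Hbw [Hq1 Hq2]]]]]]].
  destruct (biproduct_pair Hbw (idm V) (idm V)) as [Dl [HDl1 HDl2]].
  destruct (R4 V W t1 q1 t2 q2 Dl (conj Hbw (conj Hq1 Hq2)) HDl1 HDl2)
    as [Y [k [HkDl Hker]]].
  destruct (biproduct_pair Hbw (idm V) (h ∘ L)) as [P [HP1 HP2]].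
  exists Y, (k ∘ P). split.
  - assert (HPh : P ∘ h = Dl ∘ h).
    { apply (biproduct_hom_ext Hbw).
      - now rewrite !comp_assoc, HP1, HDl1.
      - rewrite !comp_assoc, HP2, HDl2, <- comp_assoc, HL.
        now rewrite comp_id_r, comp_id_l. }
    rewrite <- comp_assoc, HPh, comp_assoc. now apply zero_mor_compr.
  - intros T g Hg. rewrite <- comp_assoc in Hg.
    destruct (Hker T (P ∘ g) Hg) as [t [Ht _]].
    transitivity t.
    + now rewrite <- (comp_id_l g), <- HP1, <- comp_assoc, <- Ht, comp_assoc,
        HDl1, comp_id_l.
    + now rewrite comp_assoc, <- HP2, <- comp_assoc, <- Ht, comp_assoc, HDl2,
        comp_id_l.
Qed.

Lemma split_mono_isometry_iso :
  exists (J : Ob C) (j : Hom C J V) (m : Hom C A J) (m' : Hom C J A),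
    j^* ∘ j = idm J /\ h = j ∘ m /\ m' ∘ m = idm A /\ m ∘ m' = idm J.
Proof.
  destruct split_mono_kernel as [Y [f [Hfh Hfact]]].
  destruct HC as [_ [_ [R3 _]]].
  destruct (R3 V Y f) as [J [j [[Hfj Hker] Hjj]]].
  destruct (Hker A h Hfh) as [m [Hm _]].
  exists J, j, m, (L ∘ j). split; [exact Hjj|]. split; [now symmetry|]. split.
  - now rewrite <- comp_assoc, Hm.
  - assert (Hj : j ∘ (m ∘ (L ∘ j)) = j)
      by now rewrite comp_assoc, Hm, <- (Hfact J j Hfj).
    now rewrite <- (comp_id_l (m ∘ (L ∘ j))), <- Hjj, <- comp_assoc, Hj.
Qed.

End SplitMono.

Lemma invertible_star_iso {A J : Ob C} {m : Hom C A J} {m' : Hom C J A} :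
  m' ∘ m = idm A -> m ∘ m' = idm J -> invertible (m^* ∘ m).
Proof.
  intros Hm'm Hmm'. exists (m' ∘ m'^*). split.
  - rewrite <- comp_assoc, (comp_assoc m'^*), <- star_comp, Hmm', star_idm.
    now rewrite comp_id_l.
  - rewrite <- comp_assoc, (comp_assoc m), Hmm', comp_id_l, <- star_comp, Hm'm.
    apply star_idm.
Qed.

Lemma split_mono_star_square_invertible (HC : is_pre_hilbert C) {A V : Ob C}
    {h : Hom C A V} (L : Hom C V A) :
  L ∘ h = idm A -> invertible (h^* ∘ h).
Proof.
  intros HL.
  destruct (split_mono_isometry_iso HC HL) as [J [j [m [m' [Hjj [-> [Hm'm Hmm']]]]]]].
  rewrite star_comp, <- comp_assoc, (comp_assoc j^*), Hjj, comp_id_l.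
  exact (invertible_star_iso Hm'm Hmm').
Qed.

End PreHilbertFacts.

Theorem proposition6p5 (C : StarCat) (HC : is_pre_hilbert C) (A : Ob C)
  (z a b : Hom C A A) (Hz : is_zero_mor z)
  (Ha : hermitian a) (Hb : hermitian b)
  (Hba : star_le b a) (Hb0 : star_lt z b) :
  star_lt z a.
Proof.
  apply (star_lt_zero_l HC Hz) in Hb0 as [[Y0 [x ->]] [binv [Hbinv _]]].
  destruct (star_le_square HC Hba) as [V [h [p [Hph ->]]]].
  apply (star_lt_zero_l HC Hz). split; [now exists V, h|].
  apply (split_mono_star_square_invertible HC (binv ∘ x^* ∘ p)).
  now rewrite <- comp_assoc, Hph, <- comp_assoc.
Qed.
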